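(* Let $\varphi\colon\mathcal{M}\to\mathcal{X}$ be a continuous surjective map from a Hausdorff, second-countable, locally compact topological space $\mathcal{M}$ to a metric space $(\mathcal{X},\mathrm{dist})$, let $y\in\mathcal{M}$ and $x=\varphi(y)$. The following are equivalent: (i) $\varphi$ is open at $y$; (ii) $\varphi$ is approximately open at $y$; (iii) $\varphi$ satisfies the Subsequence Lifting Property at $y$; (iv) $\varphi$ satisfies the Approximate Subsequence Lifting Property at $y$; (v) $\varphi$ satisfies ''local $\Rightarrow$ local'' at $y$.
   Context: (i) Open at $y$: $\varphi(U)$ is a neighborhood of $x$ in $\mathcal{X}$ for every neighborhood $U$ of $y$. (ii) Approximately open at $y$: the closure $\overline{\varphi(U)}$ is a neighborhood of $x$ for every neighborhood $U$ of $y$. (iii) SLP at $y$: for every sequence $(x_i)\subseteq\mathcal{X}$ converging to $x$ there exist a subsequence $(x_{i_j})$ and a sequence $(y_{i_j})\subseteq\mathcal{M}$ converging to $y$ with $\varphi(y_{i_j})=x_{i_j}$ for all $j$. (iv) ASLP at $y$: for every sequence $(x_i)\subseteq\mathcal{X}$ converging to $x$ and every sequence $(\epsilon_i)\subseteq\mathbb{R}_{>0}$ converging to $0$ there exist a subsequence indexed by $(i_j)$ and a sequence $(y_{i_j})\subseteq\mathcal{M}$ converging to $y$ with $\mathrm{dist}(\varphi(y_{i_j}),x_{i_j})\le\epsilon_{i_j}$ for all $j$. (v) ''local $\Rightarrow$ local'' at $y$: for every continuous $f\colon\mathcal{X}\to\mathbb{R}$, if $y$ is a local minimum of $f\circ\varphi$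 on $\mathcal{M}$ then $x$ is a local minimum of $f$ on $\mathcal{X}$. A neighborhood of a point is a set containing it in its interior. *)

From HB Require Import structures.
From mathcomp Require Import all_boot all_order all_algebra.
From mathcomp Require Import all_classical all_reals all_analysis.
Set Implicit Arguments. Unset Strict Implicit. Unset Printing Implicit Defensive.
Import Order.TTheory GRing.Theory Num.Theory numFieldTopology.Exports numFieldNormedType.Exports.
Local Open Scope classical_set_scope.
Local Open Scope ring_scope.

Definition locally_compact_space (T : topologicalType) : Prop :=
  forall p : T, exists2 K : set T, nbhs p K & compact K.

Section Props.
Variables (R : realType) (M : topologicalType) (X : metricType R) (phi : M -> X).

Definition open_at (y : M) : Prop :=
  forall U : set M, nbhs y U -> nbhs (phi y) (phi @` U).

Definition approx_open_at (y : M) : Prop :=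
  forall U : set M, nbhs y U -> nbhs (phi y) (closure (phi @` U)).

Definition SLP_at (y : M) : Prop :=
  forall xs : nat -> X, xs @ \oo --> phi y ->
  exists (idx : nat -> nat) (ys : nat -> M),
    [/\ (forall j, (idx j < idx j.+1)%N), ys @ \oo --> y &
        forall j, phi (ys j) = xs (idx j)].

Definition ASLP_at (y : M) : Prop :=
  forall (xs : nat -> X) (eps : nat -> R),
  xs @ \oo --> phi y -> (forall i, 0 < eps i) -> eps @ \oo --> (0 : R) ->
  exists (idx : nat -> nat) (ys : nat -> M),
    [/\ (forall j, (idx j < idx j.+1)%N), ys @ \oo --> y &
        forall j, mdist (phi (ys j)) (xs (idx j)) <= eps (idx j)].

Definition local_min_at (T : topologicalType) (g : T -> R) (p : T) : Prop :=
  \forall z \near p, g p <= g z.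

Definition local_local_at (y : M) : Prop :=
  forall f : X -> R, continuous f ->
  local_min_at (f \o phi) y -> local_min_at f (phi y).

End Props.

From HB Require Import structures.
From mathcomp Require Import all_boot all_order all_algebra.
From mathcomp Require Import all_classical all_reals all_analysis.
From mathcomp Require Import lra zify.
Set Implicit Arguments. Unset Strict Implicit. Unset Printing Implicit Defensive.
Import Order.TTheory GRing.Theory Num.Theory numFieldTopology.Exports numFieldNormedType.Exports.
Local Open Scope classical_set_scope.
Local Open Scope ring_scope.

(* Openness at [y] yields the subsequence lifting property by choosing lifts in
   a decreasing countable neighbourhood base at [y].  The lifting properties in
   turn force approximate openness: if [closure (phi @` U)] is not a
   neighbourhood of [phi y], take points [x_i --> phi y] outside it, with
   tolerances [eps_i] equal to half their distance to [phi @` U]; no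
   approximate lift of them can enter [U].  "Local => local" gives approximate
   openness too, by testing it on [f = - dist(., phi @` U)].  Finally,
   approximate openness is openness: shrink [U] to a neighbourhood [V] of [y]
   whose closure is compact and inside [U]; then [phi @` closure V] is compact,
   hence closed. *)

Section dist_set.
Variables (R : realType) (X : metricType R) (S : set X).
Hypothesis S0 : S !=set0.

Definition dist_set (w : X) : R := inf (mdist w @` S).

Let mdist_image_lbound w : has_lbound (mdist w @` S).
Proof. by exists 0 => _ [p _ <-]; exact: mdist_ge0. Qed.

Let mdist_image_neq0 w : mdist w @` S !=set0.
Proof. by have [p Sp] := S0; exists (mdist w p), p. Qed.

Lemma dist_set_ge0 w : 0 <= dist_set w.
Proof. by apply: lb_le_inf => // _ [p _ <-]; exact: mdist_ge0. Qed.

Lemma dist_set_le w p : S p -> dist_set w <= mdist w p.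
Proof. by move=> Sp; apply: ge_inf => //; exists p. Qed.

Lemma dist_set_eq0 p : S p -> dist_set p = 0.
Proof.
by move=> Sp; apply/eqP; rewrite eq_le dist_set_ge0 -(mdistxx p) dist_set_le.
Qed.

Lemma dist_set_leD w w' : dist_set w <= dist_set w' + mdist w w'.
Proof.
rewrite -lerBlDr; apply: lb_le_inf => // _ [p Sp <-].
by rewrite lerBlDr (le_trans (dist_set_le w Sp)) // addrC metric_triangle.
Qed.

Lemma continuous_dist_set : continuous dist_set.
Proof.
move=> w; apply/cvgrPdist_lt => e e0.
apply: filterS (@nbhsx_ballx _ X w e e0) => z; rewrite ballEmdist /= => wz.
have := dist_set_leD w z; have := dist_set_leD z w; rewrite metric_sym.
by rewrite ltr_distl; lra.
Qed.

Lemma dist_set_eq0_closure w : dist_set w = 0 -> closure S w.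
Proof.
move=> dw0 B /nbhs_ballP[r r0 rB].
have /inf_lt[//|_ [p Sp <-] wp] : inf (mdist w @` S) < r.
  by rewrite -/(dist_set w) dw0.
by exists p; split => //; apply: rB; rewrite ballEmdist.
Qed.

End dist_set.

Lemma not_nbhs_cvg_outside (R : realType) (X : metricType R) (x : X) (A : set X) :
  ~ nbhs x A -> exists2 xs : nat -> X, xs @ \oo --> x & forall n, ~ A (xs n).
Proof.
move=> nA.
have out n : exists z, mdist x z < n.+1%:R^-1 /\ ~ A z.
  apply: contrapT => /forallNP inA; apply: nA; apply/nbhs_ballP.
  exists n.+1%:R^-1; first by rewrite /= invr_gt0.
  move=> z; rewrite ballEmdist /= => xz; apply: contrapT => nAz.
  by apply: (inA z).
have [xs xsP] := choice out.
exists xs => [|n]; last by have [] := xsP n.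
apply/metricType_numDomainType.cvgrPdist_lt => e e0.
apply: filterS (near_infty_natSinv_lt (PosNum e0)) => n /=.
by have [xn _] := xsP n; apply: lt_trans.
Qed.

Lemma closure_image_sub (T U : topologicalType) (f : T -> U) (V : set T) :
  hausdorff_space U -> continuous f -> compact (closure V) ->
  closure (f @` V) `<=` f @` closure V.
Proof.
move=> hU cf cV.
have /closure_id -> : closed (f @` closure V).
  apply: compact_closed => //; apply: continuous_compact => //.
  exact: continuous_subspaceT.
by apply/closureS/image_subset; exact: subset_closure.
Qed.

Lemma nbhs_compact_closure_sub (T : topologicalType) (y : T) (U : set T) :
  hausdorff_space T -> locally_compact_space T -> nbhs y U ->
  exists2 V, nbhs y V & compact (closure V) /\ closure V `<=` U.
Proof.
move=> hT lcT yU; have [C yC cC] := lcT y.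
have [V yV VUC] := compact_regular hT cC yC (filterI yU yC).
exists V => //; split => [|z /VUC[] //].
by apply: (subclosed_compact _ cC); [exact: closed_closure | move=> z /VUC[]].
Qed.

Fixpoint prefix_meet (T : Type) (g : nat -> set T) (k : nat) : set T :=
  if k is k'.+1 then prefix_meet g k' `&` g k' else setT.

Lemma prefix_meet_nonincreasing (T : Type) (g : nat -> set T) (j k : nat) :
  (j <= k)%N -> prefix_meet g k `<=` prefix_meet g j.
Proof.
elim: k => [|k IH]; first by rewrite leqn0 => /eqP ->.
by rewrite leq_eqVlt => /predU1P[-> //|/IH jk z [/jk]].
Qed.

Lemma nbhs_countable_base (T : topologicalType) (y : T) :
  @second_countable T -> exists g : nat -> set T,
    (forall n, nbhs y (g n)) /\ forall U, nbhs y U -> exists n, g n `<=` U.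
Proof.
move=> [B /countable_injP[f finj] [Bopen Bbase]].
(* [Bf n] has at most one element, by injectivity of [f] on [B]. *)
pose Bf n := [set b | (B b /\ b y) /\ f b = n].
exists (fun n => xget setT (Bf n)); split => [n|U /(Bbase y)[b [Bb yb] bU]].
  case: xgetP => [b _ [[Bb yb] _]|_]; last exact: filterT.
  by apply: open_nbhs_nbhs; split => //; exact: Bopen.
exists (f b).
have [[Bb' _] fb'] := @xgetI _ setT (Bf (f b)) b (conj (conj Bb yb) erefl).
by rewrite (finj _ _ _ _ fb') ?inE.
Qed.

Lemma nbhs_nonincreasing_countable_base (T : topologicalType) (y : T) :
  @second_countable T -> exists W : nat -> set T,
    [/\ forall k, nbhs y (W k), forall j k, (j <= k)%N -> W k `<=` W j &
        forall U, nbhs y U -> exists k, W k `<=` U].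
Proof.
move=> /(nbhs_countable_base y)[g [gy gbase]].
exists (prefix_meet g); split => [|j k|].
- by elim=> [|k IH] /=; [exact: filterT | exact: filterI].
- exact: prefix_meet_nonincreasing.
- by move=> U /gbase[n gnU]; exists n.+1 => z [_ /gnU].
Qed.

Lemma strictly_increasing_above (N : nat -> nat) : exists idx : nat -> nat,
  (forall j, (idx j < idx j.+1)%N) /\ forall j, (N j <= idx j)%N.
Proof.
exists (fun j => \sum_(m < j.+1) N m + j)%N; split => j.
  by rewrite [X in (_ < X + _)%N]big_ord_recr /=; lia.
by rewrite big_ord_recr /=; lia.
Qed.

Section open_at_equivalences.
Variables (R : realType) (M : topologicalType) (X : metricType R).
Variables (phi : M -> X) (y : M).

Lemma open_at_approx_open : open_at phi y -> approx_open_at phi y.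
Proof. by move=> ophi U yU; apply: filterS (ophi U yU); exact: subset_closure. Qed.

Lemma approx_open_at_open : hausdorff_space M -> locally_compact_space M ->
  continuous phi -> approx_open_at phi y -> open_at phi y.
Proof.
move=> hM lcM cphi aphi U yU.
have [V yV [cV VU]] := nbhs_compact_closure_sub hM lcM yU.
apply: filterS (aphi V yV).
exact: subset_trans (closure_image_sub (@metric_hausdorff _ X) cphi cV)
  (image_subset phi VU).
Qed.

Lemma open_at_SLP : @second_countable M -> open_at phi y -> SLP_at phi y.
Proof.
move=> scM ophi xs xs_y.
have [W [Wy Wdecr Wbase]] := nbhs_nonincreasing_countable_base y scM.
have eventually_in k : exists N, forall i, (N <= i)%N -> (phi @` W k) (xs i).
  by have [N _ NP] := xs_y _ (ophi _ (Wy k)); exists N.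
have [N NP] := choice eventually_in.
have [idx [idx_incr idx_ge]] := strictly_increasing_above N.
have lift j : exists z, W j z /\ phi z = xs (idx j).
  by have [z Wz <-] := NP j _ (idx_ge j); exists z.
have [ys ysP] := choice lift.
exists idx, ys; split => // [U yU|j]; last by have [] := ysP j.
have [k WkU] := Wbase U yU.
by exists k => // j /= kj; apply/WkU/(Wdecr _ _ kj); have [] := ysP j.
Qed.

Lemma SLP_at_ASLP : SLP_at phi y -> ASLP_at phi y.
Proof.
move=> slp xs eps xs_y eps_gt0 _.
have [idx [ys [idx_incr ys_y lift]]] := slp xs xs_y.
by exists idx, ys; split => // j; rewrite lift mdistxx ltW.
Qed.

Lemma ASLP_at_approx_open : ASLP_at phi y -> approx_open_at phi y.
Proof.
move=> aslp U yU; apply: contrapT => /not_nbhs_cvg_outside[xs xs_y xs_out].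
pose S := phi @` U.
have Sy : S (phi y) by exists y => //; exact: nbhs_singleton.
have S0 : S !=set0 by exists (phi y).
have d_gt0 n : 0 < dist_set S (xs n).
  rewrite lt_neqAle dist_set_ge0 // andbT eq_sym.
  by apply/eqP => /(dist_set_eq0_closure S0); exact: xs_out.
pose eps n := dist_set S (xs n) / 2.
have eps_gt0 n : 0 < eps n by rewrite divr_gt0.
have eps_0 : eps @ \oo --> 0.
  rewrite -(mul0r 2^-1) -(dist_set_eq0 S0 Sy); apply: cvgM; last exact: cvg_cst.
  have cd : continuous (dist_set S) := continuous_dist_set S0.
  exact: continuous_cvg _ (cd (phi y)) xs_y.
have [idx [ys [_ ys_y close]]] := aslp xs eps xs_y eps_gt0 eps_0.
have [N _ UN] := ys_y U yU.
have SyN : S (phi (ys N)) by exists (ys N) => //; apply: UN => /=.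
have := dist_set_le (xs (idx N)) SyN; rewrite metric_sym.
by have := close N; have := d_gt0 (idx N); rewrite /eps; lra.
Qed.

Lemma open_at_local_local : open_at phi y -> local_local_at phi y.
Proof. by move=> ophi f _ fmin; apply: filterS (ophi _ fmin) => _ [z fz <-]. Qed.

Lemma local_local_at_approx_open : local_local_at phi y -> approx_open_at phi y.
Proof.
move=> ll U yU.
pose S := phi @` U.
have Sy : S (phi y) by exists y => //; exact: nbhs_singleton.
have S0 : S !=set0 by exists (phi y).
pose f w := - dist_set S w.
have cf : continuous f by move=> w; apply: cvgN; exact: continuous_dist_set.
have fmin : local_min_at (f \o phi) y.
  by apply: filterS yU => z Uz; rewrite /f /= !dist_set_eq0 //; exists z.
apply: filterS (ll f cf fmin) => w; rewrite /f dist_set_eq0 // oppr0 oppr_ge0 => dw.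
by apply: (dist_set_eq0_closure S0); apply/eqP; rewrite eq_le dw dist_set_ge0.
Qed.

End open_at_equivalences.

Theorem theoremA2 (R : realType) (M : topologicalType) (X : metricType R)
  (phi : M -> X)
  (hT2 : hausdorff_space M) (hsc : @second_countable M)
  (hlc : locally_compact_space M)
  (hcont : continuous phi) (hsurj : forall x : X, exists y : M, phi y = x)
  (y : M) :
  [/\ (open_at phi y <-> approx_open_at phi y),
      (open_at phi y <-> SLP_at phi y),
      (open_at phi y <-> ASLP_at phi y) &
      (open_at phi y <-> local_local_at phi y)].
Proof.
have approx_open : approx_open_at phi y -> open_at phi y :=
  approx_open_at_open hT2 hlc hcont.
split; split.
- exact: open_at_approx_open.
- exact: approx_open.
- exact: open_at_SLP.
- by move/SLP_at_ASLP/ASLP_at_approx_open.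
- by move/(open_at_SLP hsc)/SLP_at_ASLP.
- by move/ASLP_at_approx_open.
- exact: open_at_local_local.
- by move/local_local_at_approx_open.
Qed.
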